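(* Let $n\ge 3$ and let $A=(a_{ij})_{i,j=1}^n\in\mathbb{R}^{n\times n}$ be symmetric with $\max_{i,j}|a_{ij}|=1$. Suppose $A=LTL^T$, where $L=(l_{ij})_{i,j=1}^n$ is unit lower triangular with first column equal to $e_1$ (the first column of the identity matrix) and $|l_{ij}|\le 1$ for all $i,j$, and $T=(t_{ij})_{i,j=1}^n$ is symmetric tridiagonal. Then: (a) $|t_{11}|\le 1$, $|t_{21}|\le 1$, $|t_{22}|\le 1$, and $|l_{i2}\,t_{21}|\le 1$ for $3\le i\le n$; (b) $\left|l_{i,j-1}\,t_{j-1,j}+l_{ij}\,t_{jj}+l_{i,j+1}\,t_{j+1,j}\right|\le 2^{j-2}$ for all $2\le j<i\le n$; (c) $\left|l_{n,n-1}\,t_{n-1,n}+t_{nn}\right|\le 2^{n-2}$; (d) $|t_{i,i-1}|\le 2^{i-2}$ and $|t_{ii}|\le 2^{i-1}$ for $3\le i\le n$.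
   Context: This is the setting of Aasen's algorithm: for a symmetric matrix $A$, Aasen's algorithm computes a permutation matrix $P$ such that $PAP^T=LTL^T$ with $L$ and $T$ as described; the statement is applied with $A$ replaced by $PAP^T$ (which has the same maximal absolute entry). Entries $l_{ij}$ with $j>i$ are $0$ and $l_{ii}=1$. *)

From HB Require Import structures.
From mathcomp Require Import all_boot all_order all_algebra.
Set Implicit Arguments. Unset Strict Implicit. Unset Printing Implicit Defensive.
Import Order.TTheory GRing.Theory Num.Theory.
Local Open Scope ring_scope.

(* 1-based entry access: ent A i j = a_{ij} for 1 <= i,j <= n (0 outside). *)
Definition ent (R : nzRingType) (n : nat) (A : 'M[R]_n) (i j : nat) : R :=
  match (insub i.-1 : option 'I_n), (insub j.-1 : option 'I_n) with
  | Some i', Some j' => A i' j'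
  | _, _ => 0
  end.

From HB Require Import structures.
From mathcomp Require Import all_boot all_order all_algebra.
From mathcomp Require Import zify.

(* Write M = L T.  As L is unit lower triangular with first column e_1,
   a_ik = m_ik + sum_(0 < p < k) m_ip l_kp (0-based), so |l_kp| <= 1 gives
   |m_ik| <= 1 + sum_(0 < p < k) |m_ip|, whence |m_ik| <= 2^(k-1) by
   induction (the truncated k - 1 gives the bound 1 in column 0).
   Since T is tridiagonal, m_ij = l_(i,j-1) t_(j-1,j) + l_ij t_jj + l_(i,j+1) t_(j+1,j),
   which collapses to t_(j-1,j) in row j-1 and to l_(j,j-1) t_(j-1,j) + t_jj in
   row j; these are the quantities bounded in (a)-(d). *)

Set Implicit Arguments.
Unset Strict Implicit.
Unset Printing Implicit Defensive.
Import Order.TTheory GRing.Theory Num.Theory.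
Local Open Scope ring_scope.

Lemma sum_on_support (R : nmodType) (I : finType) (S : seq I) (F : I -> R) :
  uniq S -> (forall p, p \notin S -> F p = 0) -> \sum_p F p = \sum_(p <- S) F p.
Proof. by move=> uS F0; rewrite [RHS]big_uniq // [RHS]big_rmcond // => p /F0. Qed.

Lemma geom_pow2 (R : pzSemiRingType) k :
  1 + \sum_(p < k | (0 < p)%N) 2%:R ^+ (p - 1) = 2%:R ^+ (k - 1) :> R.
Proof.
elim: k => [|k IH]; first by rewrite big_ord0 addr0.
rewrite big_mkcond big_ord_recr /= -big_mkcond addrA IH.
case: k {IH} => [|k]; first by rewrite addr0.
by rewrite !subSS !subn0 exprS mulr_natl mulr2n.
Qed.

Lemma le_pow2_of_le_partial_sums (R : numDomainType) n (x : 'I_n -> R) :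
  (forall k, x k <= 1 + \sum_(p : 'I_n | (0 < p < k)%N) x p) ->
  forall k : 'I_n, x k <= 2%:R ^+ (k - 1).
Proof.
move=> x_le k; have [m] := ubnP k; elim: m k => // m IH k /ltnSE km.
apply: le_trans (x_le k) _; rewrite -(@geom_pow2 R k) lerD2l.
rewrite (big_ord_widen_cond n (fun p => 0 < p)%N (fun p => 2%:R ^+ (p - 1))) //;
  last exact: ltnW.
by apply: ler_sum => p /andP[_ pk]; apply: IH; apply: leq_trans km.
Qed.

Section LeftFactorBound.

Variables (R : numDomainType) (m n : nat) (A M : 'M[R]_(m, n)) (L : 'M[R]_n).
Hypotheses (AE : A = M *m L^T) (A_le1 : forall i j, `|A i j| <= 1)
  (L_le1 : forall i j, `|L i j| <= 1)
  (L_upper0 : forall i j : 'I_n, (i < j)%N -> L i j = 0)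
  (L_diag1 : forall i : 'I_n, L i i = 1)
  (L_col0 : forall i j : 'I_n, j = 0%N :> nat -> (0 < i)%N -> L i j = 0).

Lemma left_factor_expand i k :
  A i k = M i k + \sum_(p : 'I_n | (0 < p < k)%N) M i p * L k p.
Proof.
rewrite AE mxE (bigD1 k) //= mxE L_diag1 mulr1; congr (_ + _).
rewrite big_mkcond [RHS]big_mkcond; apply: eq_bigr => p _; rewrite mxE.
case: eqVneq => [->|pk] /=; first by rewrite ltnn andbF.
case: (ltngtP p k) => [p_lt_k|k_lt_p|/val_inj e]; last by rewrite e eqxx in pk.
  by rewrite andbT; case: posnP => p0 //; rewrite L_col0 ?mulr0 //; lia.
by rewrite andbF L_upper0 ?mulr0.
Qed.

Lemma norm_left_factor_le_pow2 i k : `|M i k| <= 2%:R ^+ (k - 1).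
Proof.
move: k; apply: (le_pow2_of_le_partial_sums (x := fun k => `|M i k|)) => k.
have -> : M i k = A i k - \sum_(p : 'I_n | (0 < p < k)%N) M i p * L k p.
  by rewrite left_factor_expand addrK.
apply: le_trans (ler_normB _ _) (lerD (A_le1 _ _) _).
apply: le_trans (ler_norm_sum _ _ _) (ler_sum _ _) => p _.
by rewrite normrM ler_piMr ?L_le1.
Qed.

End LeftFactorBound.

Section TridiagonalProduct.

Variables (R : pzRingType) (n : nat) (T : 'M[R]_n).
Hypothesis T_band : forall p q : 'I_n, (p.+1 < q)%N || (q.+1 < p)%N -> T p q = 0.

Lemma mulmx_tridiag_inner (X : 'M[R]_n) i (a b c : 'I_n) :
  b = a.+1 :> nat -> c = b.+1 :> nat ->
  (X *m T) i b = X i a * T a b + X i b * T b b + X i c * T c b.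
Proof.
move=> ab bc; rewrite mxE (sum_on_support (S := [:: a; b; c])).
- by rewrite !big_cons big_nil addr0 addrA.
- by rewrite /= !inE -!val_eqE /=; lia.
by move=> p; rewrite !inE -!val_eqE /= => pS; rewrite T_band ?mulr0 //; lia.
Qed.

Lemma mulmx_tridiag_col0 (X : 'M[R]_n) i (k0 k1 : 'I_n) :
  k0 = 0%N :> nat -> k1 = 1%N :> nat ->
  (X *m T) i k0 = X i k0 * T k0 k0 + X i k1 * T k1 k0.
Proof.
move=> k0E k1E; rewrite mxE (sum_on_support (S := [:: k0; k1])).
- by rewrite !big_cons big_nil addr0.
- by rewrite /= !inE -!val_eqE /=; lia.
by move=> p; rewrite !inE -!val_eqE /= => pS; rewrite T_band ?mulr0 //; lia.
Qed.

Variable L : 'M[R]_n.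
Hypotheses (L_upper0 : forall i j : 'I_n, (i < j)%N -> L i j = 0)
  (L_diag1 : forall i : 'I_n, L i i = 1).

Lemma mulmx_unitri_tridiag_super (a b : 'I_n) :
  b = a.+1 :> nat -> (L *m T) a b = T a b.
Proof.
move=> ab; rewrite mxE (sum_on_support (S := [:: a])) ?big_seq1 ?L_diag1 ?mul1r //.
move=> p; rewrite !inE -!val_eqE /= => pa.
case: (ltnP a p) => [ap|pa']; first by rewrite L_upper0 ?mul0r.
by rewrite T_band ?mulr0 //; lia.
Qed.

Lemma mulmx_unitri_tridiag_diag (a b : 'I_n) :
  b = a.+1 :> nat -> (L *m T) b b = L b a * T a b + T b b.
Proof.
move=> ab; rewrite mxE (sum_on_support (S := [:: a; b])).
- by rewrite !big_cons big_nil addr0 L_diag1 mul1r.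
- by rewrite /= !inE -!val_eqE /=; lia.
move=> p; rewrite !inE -!val_eqE /= => pS.
case: (ltnP b p) => [bp|pb]; first by rewrite L_upper0 ?mul0r.
by rewrite T_band ?mulr0 //; lia.
Qed.

End TridiagonalProduct.

Section AasenBounds.

Variables (R : numDomainType) (n : nat) (A L T : 'M[R]_n).
Hypotheses (AE : A = L *m T *m L^T) (A_le1 : forall i j, `|A i j| <= 1)
  (L_le1 : forall i j, `|L i j| <= 1)
  (L_upper0 : forall i j : 'I_n, (i < j)%N -> L i j = 0)
  (L_diag1 : forall i : 'I_n, L i i = 1)
  (L_col0 : forall i j : 'I_n, j = 0%N :> nat -> (0 < i)%N -> L i j = 0)
  (T_sym : T^T = T) (T_upper0 : forall i j : 'I_n, (i.+1 < j)%N -> T i j = 0).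

Let T_symE (p q : 'I_n) : T p q = T q p.
Proof. by rewrite -{1}T_sym mxE. Qed.

Let T_band (p q : 'I_n) : (p.+1 < q)%N || (q.+1 < p)%N -> T p q = 0.
Proof. by case/orP => /T_upper0 //; rewrite T_symE. Qed.

Let norm_LT_le (i k : 'I_n) : `|(L *m T) i k| <= 2%:R ^+ (k - 1).
Proof. exact: norm_left_factor_le_pow2 AE A_le1 L_le1 L_upper0 L_diag1 L_col0 i k. Qed.

Let norm_LT_le1 (i k : 'I_n) : (k <= 1)%N -> `|(L *m T) i k| <= 1.
Proof. by move=> k_le1; have := @norm_LT_le i k; rewrite (_ : k - 1 = 0)%N //; lia. Qed.

Section FirstColumns.

Variables k0 k1 : 'I_n.
Hypotheses (k0E : k0 = 0%N :> nat) (k1E : k1 = 1%N :> nat).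

Lemma norm_first_cols_le1 :
  [/\ `|T k0 k0| <= 1, `|T k1 k0| <= 1, `|T k1 k1| <= 1 &
       forall i : 'I_n, (0 < i)%N -> `|L i k1 * T k1 k0| <= 1].
Proof.
have k10 : k1 = k0.+1 :> nat by rewrite k0E k1E.
split.
- have := @norm_LT_le1 k0 k0; rewrite k0E => /(_ isT).
  rewrite (mulmx_tridiag_col0 T_band L k0 k0E k1E) L_diag1 L_upper0 ?k0E ?k1E //.
  by rewrite mul0r addr0 mul1r.
- rewrite T_symE -(mulmx_unitri_tridiag_super T_band L_upper0 L_diag1 k10).
  by rewrite norm_LT_le1 ?k1E.
- have := @norm_LT_le1 k1 k1; rewrite k1E => /(_ isT).
  rewrite (mulmx_unitri_tridiag_diag T_band L_upper0 L_diag1 k10).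
  by rewrite (@L_col0 k1 k0) ?k1E ?mul0r ?add0r.
move=> i i_gt0; have := @norm_LT_le1 i k0; rewrite k0E => /(_ isT).
by rewrite (mulmx_tridiag_col0 T_band L i k0E k1E) (@L_col0 i k0) ?mul0r ?add0r.
Qed.

End FirstColumns.

Section InnerColumns.

Variables a b : 'I_n.
Hypothesis ab : b = a.+1 :> nat.

Let norm_LT_col_le i : `|(L *m T) i b| <= 2%:R ^+ a.
Proof. by have := @norm_LT_le i b; rewrite ab subSS subn0. Qed.

Lemma norm_Lrow_Tcol_le (i c : 'I_n) : c = b.+1 :> nat ->
  `|L i a * T a b + L i b * T b b + L i c * T c b| <= 2%:R ^+ a.
Proof. by move=> bc; rewrite -(mulmx_tridiag_inner T_band L i ab bc) norm_LT_col_le. Qed.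

Lemma norm_Lrow_Tdiag_le : `|L b a * T a b + T b b| <= 2%:R ^+ a.
Proof. by rewrite -(mulmx_unitri_tridiag_diag T_band L_upper0 L_diag1 ab) norm_LT_col_le. Qed.

Lemma norm_T_subdiag_le : `|T b a| <= 2%:R ^+ a.
Proof.
by rewrite T_symE -(mulmx_unitri_tridiag_super T_band L_upper0 L_diag1 ab) norm_LT_col_le.
Qed.

Lemma norm_T_diag_le : `|T b b| <= 2%:R ^+ b.
Proof.
have -> : T b b = (L *m T) b b - L b a * T a b.
  by rewrite (mulmx_unitri_tridiag_diag T_band L_upper0 L_diag1 ab) addrC addKr.
rewrite ab exprS mulr_natl mulr2n.
apply: le_trans (ler_normB _ _) (lerD (norm_LT_col_le b) _).
rewrite normrM -[X in _ <= X]mul1r T_symE; apply: ler_pM => //.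
exact: norm_T_subdiag_le.
Qed.

End InnerColumns.
End AasenBounds.

Lemma entE (R : nzRingType) n (A : 'M[R]_n) (i j : 'I_n) p q :
  p = i.+1 -> q = j.+1 -> ent A p q = A i j.
Proof. by move=> -> ->; rewrite /ent /= !valK. Qed.
Arguments entE {R n} A i j {p q}.

Lemma col0_below_diag0 (R : nzRingType) n (L : 'M[R]_n) :
  (forall i : nat, (1 <= i <= n)%N -> ent L i 1 = (i == 1%N)%:R) ->
  forall i k : 'I_n, k = 0%N :> nat -> (0 < i)%N -> L i k = 0.
Proof.
move=> L_col1 i k k0 i_gt0; have := L_col1 i.+1.
by rewrite (entE L i k) ?k0 // ltn_ord eqSS eqn0Ngt i_gt0 => ->.
Qed.

Theorem lemma1 (R : realFieldType) (n : nat) (A L T : 'M[R]_n) :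
  (3 <= n)%N ->
  A^T = A ->
  (forall i j, `|A i j| <= 1) ->
  (exists i j, `|A i j| = 1) ->
  A = L *m T *m L^T ->
  (forall i j : 'I_n, (i < j)%N -> L i j = 0) ->
  (forall i : 'I_n, L i i = 1) ->
  (forall i : nat, (1 <= i <= n)%N -> ent L i 1 = (i == 1%N)%:R) ->
  (forall i j, `|L i j| <= 1) ->
  T^T = T ->
  (forall i j : 'I_n, (i.+1 < j)%N -> T i j = 0) ->
  (`|ent T 1 1| <= 1 /\ `|ent T 2 1| <= 1 /\ `|ent T 2 2| <= 1 /\
   (forall i : nat, (3 <= i <= n)%N -> `|ent L i 2 * ent T 2 1| <= 1)) /\
  (forall i j : nat, (2 <= j)%N -> (j < i)%N -> (i <= n)%N ->
     `|ent L i j.-1 * ent T j.-1 j + ent L i j * ent T j j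
       + ent L i j.+1 * ent T j.+1 j| <= 2%:R ^+ (j - 2)) /\
  `|ent L n n.-1 * ent T n.-1 n + ent T n n| <= 2%:R ^+ (n - 2) /\
  (forall i : nat, (3 <= i <= n)%N ->
     `|ent T i i.-1| <= 2%:R ^+ (i - 2) /\ `|ent T i i| <= 2%:R ^+ (i - 1)).
Proof.
move=> n_ge3 _ A_le1 _ AE L_upper0 L_diag1 L_col1 L_le1 T_sym T_upper0.
have L_col0 := col0_below_diag0 L_col1.
have [n_gt0 n_gt1] : (0 < n)%N /\ (1 < n)%N by split; lia.
pose k0 := Ordinal n_gt0; pose k1 := Ordinal n_gt1.
split; [|split; [|split]].
- rewrite (entE T k0 k0) // (entE T k1 k0) // (entE T k1 k1) //.
  have [T00 T10 T11 LT10] := norm_first_cols_le1 AE A_le1 L_le1 L_upper0 L_diag1 L_col0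
    T_sym T_upper0 (k0 := k0) (k1 := k1) erefl erefl.
  do 3 (split; first done).
  move=> i /andP[i_ge3 i_le_n]; have i_lt_n : (i.-1 < n)%N by lia.
  by rewrite (entE L (Ordinal i_lt_n) k1) ?LT10 //=; lia.
- move=> i j j_ge2 j_lt_i i_le_n.
  have [hi ha hb hc] : [/\ i.-1 < n, j - 2 < n, j.-1 < n & j < n]%N by split; lia.
  pose I := Ordinal hi; pose a := Ordinal ha; pose b := Ordinal hb; pose c := Ordinal hc.
  have [iE aE bE cE] : [/\ i = I.+1, j.-1 = a.+1, j = b.+1 & j.+1 = c.+1]%N.
    by split=> /=; lia.
  rewrite (entE L I a) // (entE T a b) // (entE L I b) // (entE T b b) //.
  rewrite (entE L I c) // (entE T c b) //.
  by apply: (norm_Lrow_Tcol_le AE) => //=; lia.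
- have [ha hb] : (n - 2 < n)%N /\ (n.-1 < n)%N by split; lia.
  pose a := Ordinal ha; pose b := Ordinal hb.
  have [aE bE] : n.-1 = a.+1 /\ n = b.+1 by split=> /=; lia.
  rewrite (entE L b a) // (entE T a b) // (entE T b b) //.
  by apply: (norm_Lrow_Tdiag_le AE) => //=; lia.
move=> i /andP[i_ge3 i_le_n].
have [ha hb] : (i - 2 < n)%N /\ (i - 1 < n)%N by split; lia.
pose a := Ordinal ha; pose b := Ordinal hb.
have [aE bE] : i.-1 = a.+1 /\ i = b.+1 by split=> /=; lia.
have ab : b = a.+1 :> nat by rewrite /=; lia.
rewrite (entE T b a) // (entE T b b) //.
by split; [apply: (norm_T_subdiag_le AE) | apply: (norm_T_diag_le AE) ab].
Qed.
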